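(* Let $X$ be a compact $T_1$ topological space. Then every contractive iterated function system on $X$ has a unique attractor, i.e. its induced Hutchinson operator $F:2^X\to 2^X$ has a unique fixed point.
   Context: An iterated function system (IFS) on $X$ is a finite family $\mathcal{F}=\{f_1,\dots,f_m\}$ of closed mappings $X\to X$ (mappings sending closed sets to closed sets; continuity not assumed). It is contractive if for every open cover $\mathcal{U}$ of $X$ there is $n\in\mathbb{N}$ such that for every sequence $(i_1,\dots,i_n)\in\{1,\dots,m\}^n$ the set $f_{i_1}\circ\cdots\circ f_{i_n}[X]$ is contained in some element of $\mathcal{U}$. $2^X$ denotes the family of nonempty closed subsets of $X$, the Hutchinson operator is $F(K)=\bigcup_{i=1}^m f_i[K]$, and an attractor is a fixed point $K\in 2^X$ of $F$. *)

From HB Require Import structures.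
From mathcomp Require Import all_boot all_order all_algebra.
From mathcomp Require Import all_classical all_reals all_analysis.
Set Implicit Arguments. Unset Strict Implicit. Unset Printing Implicit Defensive.
Local Open Scope classical_set_scope.

Definition closed_map (X : topologicalType) (f : X -> X) : Prop :=
  forall A : set X, closed A -> closed (f @` A).

Definition comp_word (X : Type) (m : nat) (f : 'I_m -> X -> X)
  (w : seq 'I_m) : X -> X := foldr (fun i g => f i \o g) id w.

Definition contractive (X : topologicalType) (m : nat) (f : 'I_m -> X -> X) : Prop :=
  forall U : set (set X),
    (forall A, U A -> open A) -> [set: X] `<=` \bigcup_(A in U) A ->
    exists n : nat, forall w : n.-tuple 'I_m,
      exists2 A, U A & comp_word f w @` [set: X] `<=` A.

Definition hutchinson (X : Type) (m : nat) (f : 'I_m -> X -> X) (K : set X) : set X :=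
  \bigcup_(i in [set: 'I_m]) (f i @` K).

(* Attractor: a fixed point of F in 2^X (nonempty closed subsets). *)
Definition attractor (X : topologicalType) (m : nat) (f : 'I_m -> X -> X) (K : set X) : Prop :=
  [/\ K !=set0, closed K & hutchinson f K = K].

From HB Require Import structures.
From mathcomp Require Import all_boot all_order all_algebra.
From mathcomp Require Import all_classical all_reals all_analysis.
Set Implicit Arguments.
Unset Strict Implicit.
Unset Printing Implicit Defensive.

Local Open Scope classical_set_scope.

(* The attractor is K0 = \bigcap_n F^n(X).  The sets F^n(X) are closed, nonempty
   and decreasing, so K0 is a nonempty closed set by compactness, and every
   attractor K = F^n(K) lies in it.  Conversely, K0 is contained in every
   nonempty closed set L with F(L) <= L: if x is in K0 \ L, apply contractivity
   to the open cover {X \ L, X \ {x}} (open because X is T1); a word image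
   w[X] of the resulting length n contains x, since x is in F^n(X), and meets
   L, since L is invariant, so it fits in neither member of the cover.  Taking
   L = K and L = F(K0) gives K0 = K and F(K0) = K0. *)

Lemma compact_nested_bigcap_neq0 (T : topologicalType) (A : nat -> set T) :
  compact [set: T] -> (forall n, closed (A n)) -> (forall n, A n !=set0) ->
  (forall n, A n.+1 `<=` A n) -> \bigcap_n A n !=set0.
Proof.
move=> cT cA A0 decrA.
have homoA : {homo A : i j / (i <= j)%N >-> j `<=` i}.
  apply: (homo_leq (r := fun B C => C `<=` B)) => [B|B C D BC DB|//].
    exact: subset_refl.
  exact: subset_trans DB BC.
pose FA := filter_from [set: nat] A.
have FA_proper : ProperFilter FA.
  apply: filter_from_proper => [|n _]; last exact: A0.
  apply: filter_from_filter => [|i j _ _]; first by exists 0%N.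
  by exists (maxn i j) => //; rewrite subsetI; split; apply: homoA;
    rewrite ?leq_maxl ?leq_maxr.
have [p [_ clp]] := cT FA FA_proper filterT.
exists p => n _; rewrite (closure_id (A n)).1 //.
by move=> B nB; apply: clp nB; exists n.
Qed.

Section Hutchinson.
Variables (X : topologicalType) (m : nat) (f : 'I_m -> X -> X).
Local Notation F := (hutchinson f).

Lemma hutchinsonS A B : A `<=` B -> F A `<=` F B.
Proof. by move=> AB x [i _ [y Ay <-]]; exists i => //; exists y => //; apply: AB. Qed.

Lemma iter_hutchinsonS n A B : A `<=` B -> iter n F A `<=` iter n F B.
Proof. by move=> AB; elim: n => //= n; exact: hutchinsonS. Qed.

Lemma hutchinson_closed A :
  (forall i, closed_map (f i)) -> closed A -> closed (F A).
Proof.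
by move=> cf cA; apply: closed_bigcup => [|i _]; [exact: finite_finset|exact: cf].
Qed.

Lemma hutchinson_neq0 A : (0 < m)%N -> A !=set0 -> F A !=set0.
Proof.
by move=> m0 [y Ay]; exists (f (Ordinal m0) y); exists (Ordinal m0) => //; exists y.
Qed.

Lemma comp_word_invariant L : F L `<=` L -> forall w, comp_word f w @` L `<=` L.
Proof.
move=> FL; elim => [|i w IH] _ [y Ly <-] //=.
by apply: FL; exists i => //; exists (comp_word f w y) => //; apply: IH; exists y.
Qed.

Lemma iter_hutchinson_comp_word n A x :
  iter n F A x -> exists w : n.-tuple 'I_m, (comp_word f w @` A) x.
Proof.
elim: n x => [|n IH] x /=; first by exists [tuple]; exists x.
by move=> [i _ [y /IH [w [z Az <-]] <-]]; exists (cons_tuple i w); exists z.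
Qed.

Definition hutchinson_limit : set X := \bigcap_n iter n F [set: X].

Lemma iter_hutchinsonT_decr n : iter n.+1 F [set: X] `<=` iter n F [set: X].
Proof. by elim: n => //= n; exact: hutchinsonS. Qed.

Lemma iter_hutchinsonT_closed n :
  (forall i, closed_map (f i)) -> closed (iter n F [set: X]).
Proof. by move=> cf; elim: n => [|n IH] /=; [exact: closedT|exact: hutchinson_closed]. Qed.

Lemma hutchinson_limit_closed :
  (forall i, closed_map (f i)) -> closed hutchinson_limit.
Proof. by move=> cf; apply: closed_bigI => n _; exact: iter_hutchinsonT_closed. Qed.

Lemma hutchinson_limit_neq0 : compact [set: X] -> [set: X] !=set0 ->
  (0 < m)%N -> (forall i, closed_map (f i)) -> hutchinson_limit !=set0.
Proof.
move=> cX X0 m0 cf; apply: compact_nested_bigcap_neq0 => // [n|n|].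
- exact: iter_hutchinsonT_closed.
- by elim: n => //= n; exact: hutchinson_neq0.
- exact: iter_hutchinsonT_decr.
Qed.

Lemma hutchinson_limit_sub L : accessible_space X -> contractive f ->
  L !=set0 -> closed L -> F L `<=` L -> hutchinson_limit `<=` L.
Proof.
move=> acc ctr [l Ll] cL FL x limx; apply: contrapT => nLx.
pose U := [set A : set X | A = ~` L \/ A = ~` [set x]].
have [|z _|n Un] := ctr U.
- by move=> A [->|->]; rewrite openC //; exact: accessible_closed_set1.
- have [Lz|nLz] := pselect (L z); last by exists (~` L) => //; left.
  by exists (~` [set x]) => [|/= zx]; [right|apply: nLx; rewrite -zx].
have /iter_hutchinson_comp_word [w [y _ wyx]] := limx n I.
have [A [->|->] wXA] := Un w.
- have wlL : L (comp_word f w l) by apply: (comp_word_invariant FL); exists l.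
  by apply: (wXA (comp_word f w l)) wlL; exists l.
- by apply: (wXA x) => //; exists y.
Qed.

Lemma attractor_sub_limit K : attractor f K -> K `<=` hutchinson_limit.
Proof.
move=> [_ _ FK] x Kx n _; rewrite -(iter_fix n FK) in Kx.
exact: iter_hutchinsonS Kx.
Qed.

Lemma hutchinson_limit_attractor : compact [set: X] -> accessible_space X ->
  [set: X] !=set0 -> (0 < m)%N -> (forall i, closed_map (f i)) ->
  contractive f -> attractor f hutchinson_limit.
Proof.
move=> cX acc X0 m0 cf ctr.
have lim0 := hutchinson_limit_neq0 cX X0 m0 cf.
have Flim_sub : F hutchinson_limit `<=` hutchinson_limit.
  move=> x Flimx n _; apply: iter_hutchinsonT_decr.
  by apply: hutchinsonS Flimx => y; apply.
split => //; first exact: hutchinson_limit_closed.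
apply/seteqP; split => //; apply: hutchinson_limit_sub => //.
- exact: hutchinson_neq0.
- exact/hutchinson_closed/hutchinson_limit_closed.
- exact: hutchinsonS.
Qed.

End Hutchinson.

Theorem theorem25 (X : topologicalType) (m : nat) (f : 'I_m -> X -> X) :
  compact [set: X] -> accessible_space X ->
  [set: X] !=set0 -> (0 < m)%N ->
  (forall i, closed_map (f i)) -> contractive f ->
  exists! K : set X, attractor f K.
Proof.
move=> cX acc X0 m0 cf ctr.
have limA := hutchinson_limit_attractor cX acc X0 m0 cf ctr.
exists (hutchinson_limit f); split => // K [K0 cK FK].
apply/seteqP; split; last exact: attractor_sub_limit.
by apply: hutchinson_limit_sub => //; rewrite FK.
Qed.
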